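(* Let $A,B,C$ be positive semidefinite complex matrices of the same order. Then \[ \det(A+B+C)+\det C\ge \det(A+C)+\det(B+C). \] *)

From HB Require Import structures.
From mathcomp Require Import all_boot all_order all_algebra.
Set Implicit Arguments. Unset Strict Implicit. Unset Printing Implicit Defensive.
Import Order.TTheory GRing.Theory Num.Theory.
Local Open Scope ring_scope.

Definition conjtr (C : numClosedFieldType) m n (A : 'M[C]_(m, n)) : 'M[C]_(n, m) :=
  (map_mx Num.conj A)^T.

Definition psd (C : numClosedFieldType) n (A : 'M[C]_n) : Prop :=
  conjtr A = A /\ forall x : 'cV[C]_n, 0 <= (conjtr x *m A *m x) 0 0.

From HB Require Import structures.
From mathcomp Require Import all_boot all_order all_algebra.
From mathcomp Require Import ring.
Import Order.TTheory GRing.Theory Num.Theory.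
Set Implicit Arguments. Unset Strict Implicit. Unset Printing Implicit Defensive.
Local Open Scope ring_scope.

(* Write Delta(A, B, D) := det (A + B + D) + det D - det (A + D) - det (B + D).
   Delta is additive in A once D is allowed to move: Delta (A1 + A2) B D =
   Delta A2 B (A1 + D) + Delta A1 B D, and likewise in B.  Decomposing A and B
   into sums of rank-one positive semidefinite matrices therefore reduces the
   claim to A = a a^H, B = b b^H.  For an invertible positive semidefinite K,
   two applications of the matrix determinant lemma give
     Delta (a a^H) (b b^H) K = det K * (a^H K^-1 a * b^H K^-1 b - |a^H K^-1 b|^2),
   which is nonnegative by Cauchy-Schwarz for the form of K^-1.  This settles
   D + t I for t > 0, and t -> 0 follows because Delta A B (D + t I) is a
   polynomial in t. *)

Lemma mx11_mul (R : pzSemiRingType) (A B : 'M[R]_1) : (A *m B) 0 0 = A 0 0 * B 0 0.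
Proof. by rewrite !mxE big_ord1. Qed.

Lemma det1_add_rank1 (R : comNzRingType) n (u : 'cV[R]_n) (v : 'rV[R]_n) :
  \det (1%:M + u *m v) = 1 + (v *m u) 0 0.
Proof.
pose M := block_mx (1%:M : 'M[R]_n) u (- v) (1%:M : 'M_1).
have eM_lu : M = block_mx 1%:M 0 (- v) 1%:M *m block_mx 1%:M u 0 (1%:M + v *m u).
  rewrite mulmx_block !mul1mx !mul0mx ?mulmx0 !addr0 ?add0r mulNmx mulmx1.
  by rewrite ?mulNmx addrCA addNr addr0.
have eM_ul : M = block_mx (1%:M + u *m v) u 0 1%:M *m block_mx 1%:M 0 (- v) 1%:M.
  rewrite mulmx_block !mul1mx !mul0mx ?mulmx0 !mulmx1 ?addr0 ?add0r mulmxN.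
  by rewrite addrK.
have := congr1 determinant eM_lu.
rewrite eM_ul !det_mulmx !det_lblock !det_ublock !det1 !mulr1 !mul1r => ->.
by rewrite det_mx11 !mxE eqxx.
Qed.

Section RankOneUpdates.
Variables (F : fieldType) (n : nat).
Implicit Types (K : 'M[F]_n) (u : 'cV[F]_n) (v : 'rV[F]_n).

Lemma det_add_rank1 K u v : K \in unitmx ->
  \det (K + u *m v) = \det K * (1 + (v *m invmx K *m u) 0 0).
Proof.
move=> Ku; have -> : K + u *m v = K *m (1%:M + (invmx K *m u) *m v).
  by rewrite mulmxDr mulmx1 !mulmxA mulmxV // mul1mx.
by rewrite det_mulmx det1_add_rank1 mulmxA.
Qed.

Lemma sherman_morrison K u v : K \in unitmx ->
  1 + (v *m invmx K *m u) 0 0 != 0 ->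
  (K + u *m v) *m (invmx K - (1 + (v *m invmx K *m u) 0 0)^-1
                              *: (invmx K *m u *m v *m invmx K)) = 1%:M.
Proof.
move=> Ku nz_c; set Ki := invmx K; set al := (v *m Ki *m u) 0 0.
set c := (1 + al)^-1.
have KKi : K *m (Ki *m u *m v *m Ki) = u *m v *m Ki.
  by rewrite !mulmxA mulmxV // mul1mx.
have uvKi : u *m v *m (Ki *m u *m v *m Ki) = al *: (u *m v *m Ki).
  have -> : u *m v *m (Ki *m u *m v *m Ki) = u *m (v *m Ki *m u) *m (v *m Ki).
    by rewrite !mulmxA.
  by rewrite [v *m Ki *m u]mx11_scalar mul_mx_scalar -scalemxAl mulmxA.
have c_al : c * al = 1 - c by rewrite /c; field.
rewrite mulmxDl !mulmxBr -!scalemxAr KKi uvKi mulmxV // scalerA c_al.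
by rewrite scalerBl scale1r opprB [u *m v *m Ki + _]addrCA subrr addr0 subrK.
Qed.

Lemma det_add_rank2 K u1 v1 u2 v2 : K \in unitmx ->
  1 + (v1 *m invmx K *m u1) 0 0 != 0 ->
  \det (K + u1 *m v1 + u2 *m v2) + \det K - \det (K + u1 *m v1) - \det (K + u2 *m v2)
  = \det K * ((v1 *m invmx K *m u1) 0 0 * (v2 *m invmx K *m u2) 0 0
              - (v1 *m invmx K *m u2) 0 0 * (v2 *m invmx K *m u1) 0 0).
Proof.
move=> Ku nz_c; have := sherman_morrison Ku nz_c.
set Ki := invmx K; set al := (v1 *m Ki *m u1) 0 0; set c := (1 + al)^-1.
set Xi := Ki - _ => XXi.
have det2 : \det (K + u1 *m v1 + u2 *m v2)
    = \det (K + u1 *m v1) * (1 + (v2 *m Xi *m u2) 0 0).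
  have -> : K + u1 *m v1 + u2 *m v2 = (K + u1 *m v1) *m (1%:M + (Xi *m u2) *m v2).
    by rewrite mulmxDr mulmx1 !mulmxA XXi mul1mx.
  by rewrite det_mulmx det1_add_rank1 mulmxA.
have formXi : (v2 *m Xi *m u2) 0 0 =
    (v2 *m Ki *m u2) 0 0 - c * ((v2 *m Ki *m u1) 0 0 * (v1 *m Ki *m u2) 0 0).
  rewrite /Xi mulmxBr mulmxBl -scalemxAr -scalemxAl.
  by rewrite [LHS]mxE [X in _ + X]mxE [X in _ - X]mxE -mx11_mul !mulmxA.
by rewrite det2 !det_add_rank1 // formXi -/Ki -/al /c; field.
Qed.

End RankOneUpdates.

Section ConjugateTranspose.
Variable C : numClosedFieldType.

Lemma conjtrK m n (A : 'M[C]_(m, n)) : conjtr (conjtr A) = A.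
Proof. by apply/matrixP => i j; rewrite /conjtr !mxE conjCK. Qed.

Lemma conjtrD m n (A B : 'M[C]_(m, n)) : conjtr (A + B) = conjtr A + conjtr B.
Proof. by rewrite /conjtr map_mxD linearD. Qed.

Lemma conjtrZ m n a (A : 'M[C]_(m, n)) : conjtr (a *: A) = Num.conj a *: conjtr A.
Proof. by rewrite /conjtr map_mxZ linearZ. Qed.

Lemma conjtrM m n p (A : 'M[C]_(m, n)) (B : 'M[C]_(n, p)) :
  conjtr (A *m B) = conjtr B *m conjtr A.
Proof. by rewrite /conjtr map_mxM trmx_mul. Qed.

Lemma conjtr_scalar n a : conjtr (a%:M : 'M[C]_n) = (Num.conj a)%:M.
Proof. by rewrite /conjtr map_scalar_mx tr_scalar_mx. Qed.

Lemma conjtr_delta n (i : 'I_n) : conjtr (delta_mx i 0 : 'cV[C]_n) = delta_mx 0 i.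
Proof. by apply/matrixP => j k; rewrite /conjtr !mxE rmorph_nat andbC. Qed.

Lemma conjtr_mx11 (A : 'M[C]_1) : conjtr A = (Num.conj (A 0 0))%:M.
Proof. by rewrite {1}[A]mx11_scalar conjtr_scalar. Qed.

Lemma dotmx_self_ge0 n (x : 'cV[C]_n) : 0 <= (conjtr x *m x) 0 0.
Proof.
rewrite mxE; apply: sumr_ge0 => i _.
by rewrite /conjtr !mxE mulrC -normCK exprn_ge0.
Qed.

Definition hform n (Q : 'M[C]_n) (x y : 'cV[C]_n) := (conjtr x *m Q *m y) 0 0.

Variables (n : nat) (Q : 'M[C]_n).
Implicit Types x y : 'cV[C]_n.

Lemma hformDl x1 x2 y : hform Q (x1 + x2) y = hform Q x1 y + hform Q x2 y.
Proof. by rewrite /hform conjtrD !mulmxDl mxE. Qed.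

Lemma hformDr x y1 y2 : hform Q x (y1 + y2) = hform Q x y1 + hform Q x y2.
Proof. by rewrite /hform mulmxDr mxE. Qed.

Lemma hformZl a x y : hform Q (a *: x) y = Num.conj a * hform Q x y.
Proof. by rewrite /hform conjtrZ -!scalemxAl mxE. Qed.

Lemma hformZr a x y : hform Q x (a *: y) = a * hform Q x y.
Proof. by rewrite /hform -scalemxAr mxE. Qed.

Lemma hformC x y : conjtr Q = Q -> hform Q y x = Num.conj (hform Q x y).
Proof.
move=> hermQ; have := conjtr_mx11 (conjtr x *m Q *m y).
rewrite !conjtrM conjtrK hermQ mulmxA => /(congr1 (fun M : 'M[C]_1 => M 0 0)).
by rewrite /hform => ->; rewrite mxE eqxx mulr1n.
Qed.

Hypothesis psdQ : psd Q.

Lemma hform_ge0 x : 0 <= hform Q x x.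
Proof. by case: psdQ => _ /(_ x). Qed.

Let hformNC x y : Num.conj (- hform Q y x) = - hform Q x y.
Proof. by rewrite rmorphN /= -(@hformC y x psdQ.1). Qed.

Let cauchy_schwarz_pos a b : 0 < hform Q b b ->
  hform Q a b * hform Q b a <= hform Q a a * hform Q b b.
Proof.
move=> b_gt0; have be_real : Num.conj (hform Q b b) = hform Q b b.
  by apply/CrealP; rewrite ger0_real // ltW.
have := hform_ge0 (hform Q b b *: a - hform Q b a *: b).
rewrite !(hformDl, hformDr) -!scaleNr !(hformZl, hformZr) be_real hformNC => H.
have : 0 <= hform Q b b * (hform Q a a * hform Q b b - hform Q a b * hform Q b a).
  by apply: (le_trans H); rewrite le_eqVlt; apply/orP; left; apply/eqP; ring.
by rewrite pmulr_rge0 // subr_ge0.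
Qed.

Lemma cauchy_schwarz_psd a b :
  hform Q a b * hform Q b a <= hform Q a a * hform Q b b.
Proof.
have [b_gt0|] := boolP (0 < hform Q b b); first exact: cauchy_schwarz_pos.
have [a_gt0 _|] := boolP (0 < hform Q a a).
  by rewrite mulrC [X in _ <= X]mulrC; exact: cauchy_schwarz_pos.
rewrite !lt_def !hform_ge0 !andbT !negbK => /eqP a0 /eqP b0.
have := hform_ge0 (a - hform Q b a *: b).
rewrite !(hformDl, hformDr) -!scaleNr !(hformZl, hformZr) hformNC a0 b0 => H.
have : 0 <= - (hform Q a b * hform Q b a) *+ 2.
  by apply: (le_trans H); rewrite le_eqVlt; apply/orP; left; apply/eqP; ring.
by rewrite mul0r pmulrn_lge0 // oppr_ge0.
Qed.

End ConjugateTranspose.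

Section PositiveSemidefinite.
Variables (C : numClosedFieldType) (n : nat).
Implicit Types (A B D : 'M[C]_n) (x : 'cV[C]_n).

Lemma psdD A B : psd A -> psd B -> psd (A + B).
Proof.
move=> [hA pA] [hB pB]; split; first by rewrite conjtrD hA hB.
by move=> x; rewrite mulmxDr mulmxDl mxE addr_ge0.
Qed.

Lemma psd_rank1 x : psd (x *m conjtr x).
Proof.
split=> [|y]; first by rewrite conjtrM conjtrK.
have -> : conjtr y *m (x *m conjtr x) *m y = conjtr y *m x *m conjtr (conjtr y *m x).
  by rewrite conjtrM conjtrK !mulmxA.
by rewrite mx11_mul conjtr_mx11 [_%:M 0 0]mxE eqxx mulr1n -normCK exprn_ge0.
Qed.

Lemma psd_scalar (t : C) : 0 <= t -> psd (t%:M : 'M[C]_n).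
Proof.
move=> t_ge0; split=> [|x].
  by rewrite conjtr_scalar; congr (_%:M); apply/CrealP; rewrite ger0_real.
by rewrite mul_mx_scalar -scalemxAl mxE mulr_ge0 // dotmx_self_ge0.
Qed.

Lemma det_psd_real A : psd A -> \det A \is Num.real.
Proof. by move=> [hermA _]; apply/CrealP; rewrite -det_map_mx -det_tr [X in \det X]hermA. Qed.

Lemma psd_spectral A : psd A -> exists P : 'M[C]_n, exists s : 'rV[C]_n,
  [/\ conjtr P *m P = 1%:M, P *m conjtr P = 1%:M,
      A = conjtr P *m diag_mx s *m P & forall i, 0 <= s 0 i].
Proof.
move=> [hA pA].
have hermA : A \is hermsymmx.
  by apply/is_hermitianmxP; rewrite expr0 scale1r -[LHS]hA /conjtr map_trmx.
have /orthomx_spectralP eA := hermitian_normalmx hermA.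
set P := spectralmx A in eA; set s := spectral_diag A in eA.
have PtE : conjtr P = invmx P.
  by rewrite invmx_unitary ?spectral_unitarymx // /conjtr map_trmx.
have Punit : P \in unitmx by exact/unitarymx_unit/spectral_unitarymx.
have PtP : conjtr P *m P = 1%:M by rewrite PtE mulVmx.
have PPt : P *m conjtr P = 1%:M by rewrite PtE mulmxV.
exists P, s; split=> // [|i]; first by rewrite PtE.
have := pA (conjtr P *m delta_mx i 0).
rewrite conjtrM conjtrK conjtr_delta eA -PtE.
have PPtK (M : 'M[C]_(1, n)) : M *m P *m conjtr P = M by rewrite -mulmxA PPt mulmx1.
rewrite !mulmxA !PPtK.
by rewrite -rowE -colE !mxE eqxx mulr1n.
Qed.

Lemma psd_sum_rank1 A : psd A -> exists v : 'I_n -> 'cV[C]_n,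
  A = \sum_i v i *m conjtr (v i).
Proof.
move=> /psd_spectral [P [s [_ _ eA s_ge0]]].
exists (fun i => sqrtC (s 0 i) *: (conjtr P *m delta_mx i 0)).
rewrite eA diag_mx_sum_delta mulmx_sumr mulmx_suml; apply: eq_bigr => i _.
rewrite conjtrZ conjtrM conjtrK conjtr_delta.
rewrite -[in RHS]scalemxAr -[in RHS]scalemxAl scalerA -scalemxAr -scalemxAl.
have /CrealP -> : sqrtC (s 0 i) \is Num.real by rewrite ger0_real // sqrtC_ge0.
rewrite -expr2 sqrtCK; congr (_ *: _).
by rewrite !mulmxA -[conjtr P *m delta_mx i 0 *m delta_mx 0 i]mulmxA mul_delta_mx.
Qed.

Definition posdef D := psd D /\ 0 < \det D.

Lemma posdefD_scalar D (t : C) : psd D -> 0 < t -> posdef (D + t%:M).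
Proof.
move=> Dpsd t_gt0; split; first exact/psdD/psd_scalar/ltW.
have [P [s [PtP PPt eD s_ge0]]] := psd_spectral Dpsd.
have -> : D + t%:M = conjtr P *m diag_mx (s + const_mx t) *m P.
  have -> : diag_mx (s + const_mx t) = diag_mx s + t%:M.
    by rewrite -diag_const_mx; apply/matrixP => i j; rewrite !mxE mulrnDl.
  by rewrite mulmxDr mulmxDl mul_mx_scalar -scalemxAl PtP scalemx1 -eD.
rewrite !det_mulmx det_diag mulrC mulrA -det_mulmx PPt det1 mul1r.
by apply: prodr_gt0 => i _; rewrite !mxE ltr_wpDl.
Qed.

Lemma psd_invmx D : psd D -> D \in unitmx -> psd (invmx D).
Proof.
move=> [hermD pD] Du.
have hermDi : conjtr (invmx D) = invmx D.
  by rewrite /conjtr map_invmx trmx_inv; congr invmx.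
split=> // x; have := pD (invmx D *m x).
by rewrite conjtrM hermDi !mulmxA -[_ *m invmx D *m D]mulmxA mulVmx // mulmx1.
Qed.

End PositiveSemidefinite.

Lemma horner_lipschitz0 (R : numDomainType) (p : {poly R}) : exists2 M : R, 0 <= M &
  forall t, 0 <= t -> t <= 1 -> `|p.[t] - p.[0]| <= t * M.
Proof.
elim/poly_ind: p => [|q c [M M_ge0 HM]].
  by exists 0 => // t _ _; rewrite !horner0 subr0 normr0 mulr0.
exists (`|q.[0]| + M) => [|t t_ge0 t_le1]; first by rewrite addr_ge0.
rewrite !hornerMXaddC mulr0 add0r addrK normrM (ger0_norm t_ge0) mulrC ler_wpM2l //.
rewrite -[q.[t]](subrK q.[0]) addrC (le_trans (ler_normD _ _)) // lerD2l.
by rewrite (le_trans (HM t t_ge0 t_le1)) // ler_piMl.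
Qed.

Lemma horner0_ge0 (R : numFieldType) (p : {poly R}) : p.[0] \is Num.real ->
  (forall t, 0 < t -> t <= 1 -> 0 <= p.[t]) -> 0 <= p.[0].
Proof.
move=> p0_real p_ge0; have [M M_ge0 HM] := horner_lipschitz0 p.
have near0 t : 0 < t -> t <= 1 -> - (t * M) <= p.[0].
  move=> t_gt0 t_le1; have := HM t (ltW t_gt0) t_le1.
  have p_real : p.[t] - p.[0] \is Num.real by rewrite rpredB // ger0_real ?p_ge0.
  move=> /(le_trans (real_ler_norm p_real)); rewrite lerNl; apply: le_trans.
  by rewrite lerDr p_ge0.
have [//|p0_lt0] := real_leP (real0 R) p0_real.
have den_gt0 : 0 < - p.[0] + M by rewrite ltr_wpDr // oppr_gt0.
pose t := - p.[0] / (- p.[0] + M).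
have t_gt0 : 0 < t by rewrite divr_gt0 // oppr_gt0.
have t_le1 : t <= 1 by rewrite ler_pdivrMr // mul1r lerDl.
have : t * M < - p.[0].
  by rewrite /t mulrAC ltr_pdivrMr // ltr_pM2l ?ltrDr oppr_gt0.
by have := near0 t t_gt0 t_le1; rewrite lerNl => /lt_le_trans H /H; rewrite ltxx.
Qed.

Lemma det_scalarD_char_poly (R : comNzRingType) n (A : 'M[R]_n) (t : R) :
  \det (t%:M + A) = (char_poly (- A)).[t].
Proof.
rewrite /char_poly -horner_evalE -det_map_mx /char_poly_mx; congr (\det _).
apply/matrixP => i j; rewrite !mxE rmorphB rmorphMn /=.
by rewrite !horner_evalE hornerX hornerC opprK.
Qed.

Section DetDelta.
Variables (C : numClosedFieldType) (n : nat).
Implicit Types (A B D : 'M[C]_n) (a b : 'cV[C]_n).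

Definition det_delta A B D := \det (A + B + D) + \det D - \det (A + D) - \det (B + D).

Lemma det_deltaC A B D : det_delta A B D = det_delta B A D.
Proof. by rewrite /det_delta [B + A]addrC; ring. Qed.

Lemma det_delta0 B D : det_delta 0 B D = 0.
Proof. by rewrite /det_delta !add0r; ring. Qed.

Lemma det_deltaDl A1 A2 B D :
  det_delta (A1 + A2) B D = det_delta A2 B (A1 + D) + det_delta A1 B D.
Proof.
rewrite /det_delta.
have -> : A2 + B + (A1 + D) = A1 + A2 + B + D by rewrite addrCA !addrA.
rewrite [A2 + (A1 + D)]addrCA [B + (A1 + D)]addrCA !addrA; ring.
Qed.

Lemma posdefD_rank1 a D : posdef D -> posdef (a *m conjtr a + D).
Proof.
move=> [Dpsd detD_gt0]; split; first exact: psdD (psd_rank1 a) Dpsd.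
have Du : D \in unitmx by rewrite unitmxE unitfE gt_eqF.
rewrite addrC det_add_rank1 // pmulr_rgt0 // ltr_pwDl //.
exact: hform_ge0 (psd_invmx Dpsd Du) _.
Qed.

Lemma det_delta_rank1_ge0 a b D : posdef D ->
  0 <= det_delta (a *m conjtr a) (b *m conjtr b) D.
Proof.
move=> [Dpsd detD_gt0]; have Du : D \in unitmx by rewrite unitmxE unitfE gt_eqF.
have psdDi := psd_invmx Dpsd Du.
have nz_c : 1 + (conjtr a *m invmx D *m a) 0 0 != 0.
  by rewrite gt_eqF // ltr_pwDl // (hform_ge0 psdDi).
have := det_add_rank2 b (conjtr b) Du nz_c.
rewrite /det_delta [_ + D]addrC addrA [a *m _ + D]addrC [b *m _ + D]addrC => ->.
by rewrite pmulr_rge0 // subr_ge0 (cauchy_schwarz_psd psdDi).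
Qed.

Lemma det_delta_sum_rank1l_ge0 B (I : Type) (r : seq I) (v : I -> 'cV[C]_n) :
  (forall a D, posdef D -> 0 <= det_delta (a *m conjtr a) B D) ->
  forall D, posdef D -> 0 <= det_delta (\sum_(i <- r) v i *m conjtr (v i)) B D.
Proof.
move=> rank1_ge0; elim: r => [|i r IHr] D posdefD; first by rewrite big_nil det_delta0.
rewrite big_cons det_deltaDl addr_ge0 //; first exact/IHr/posdefD_rank1.
exact: rank1_ge0.
Qed.

Lemma det_delta_posdef_ge0 A B D : psd A -> psd B -> posdef D -> 0 <= det_delta A B D.
Proof.
move=> /psd_sum_rank1 [v ->] /psd_sum_rank1 [w ->].
apply: det_delta_sum_rank1l_ge0 => a D' posdefD'; rewrite det_deltaC.
by apply: det_delta_sum_rank1l_ge0 posdefD' => b; exact: det_delta_rank1_ge0.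
Qed.

End DetDelta.

Theorem mainTheorem5 (C : numClosedFieldType) (n : nat) (A B D : 'M[C]_n) :
  psd A -> psd B -> psd D ->
  \det (A + D) + \det (B + D) <= \det (A + B + D) + \det D.
Proof.
move=> Apsd Bpsd Dpsd.
pose p := char_poly (- (A + B + D)) + char_poly (- D)
          - char_poly (- (A + D)) - char_poly (- (B + D)).
have p_delta t : p.[t] = det_delta A B (D + t%:M).
  rewrite /p !hornerE -!det_scalarD_char_poly /det_delta.
  by rewrite ![t%:M + _]addrC !addrA.
have p0_delta : p.[0] = det_delta A B D by rewrite p_delta raddf0 addr0.
have p0_real : p.[0] \is Num.real.
  by rewrite p0_delta /det_delta !(rpredB, rpredD) ?det_psd_real //; do ?apply: psdD.
have : 0 <= p.[0].
  apply: horner0_ge0 => // t t_gt0 _; rewrite p_delta.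
  exact/det_delta_posdef_ge0/posdefD_scalar.
by rewrite p0_delta /det_delta => Delta_ge0; rewrite -subr_ge0 opprD addrA.
Qed.
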